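(* Let $A\in\mathbb{R}^{n\times n}$ be monotone, let $A=P_1-R_1+S_1$ be a double weak regular splitting and $A=P_2-R_2+S_2$ a double regular splitting of $A$. Suppose $-1\notin\sigma(R_2P_1^{-1})$ and $\widehat{\mathcal{A}}^{-1}\geq 0$, where $\widehat{\mathcal{A}}=(I+R_2P_1^{-1})A$. If $P_1^{-1}R_1\geq P_2^{-1}R_2$, $P_2^{-1}S_2\geq P_1^{-1}S_1$ and $P_2^{-1}R_2+P_2^{-1}S_2\leq 0$, then $\rho(\mathcal{W}_{12})\leq\min\{\rho(T_1),\rho(T_2)\}<1$, where $$\mathcal{W}_{12}=\begin{pmatrix} P_2^{-1}R_2P_1^{-1}R_1-P_2^{-1}S_2 & -P_2^{-1}R_2P_1^{-1}S_1\\ I & 0\end{pmatrix},\qquad T_i=\begin{pmatrix} P_i^{-1}R_i & -P_i^{-1}S_i\\ I&0\end{pmatrix}\ (i=1,2).$$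
   Context: Inequalities are entrywise; $\rho$ is the spectral radius, $\sigma$ the spectrum. $A$ is monotone if $A$ is nonsingular and $A^{-1}\geq 0$. A double splitting $A=P-R+S$ with $P$ nonsingular is a double regular splitting if $P^{-1}\geq0$, $R\geq0$, $S\leq0$, and a double weak regular splitting if $P^{-1}\geq 0$, $P^{-1}R\geq0$, $P^{-1}S\leq0$. *)

From HB Require Import structures.
From mathcomp Require Import all_boot all_order all_algebra.
From mathcomp Require Import complex.
From mathcomp Require Import reals.
Set Implicit Arguments. Unset Strict Implicit. Unset Printing Implicit Defensive.
Import Order.TTheory GRing.Theory Num.Theory.
Local Open Scope ring_scope.

Section Defs.
Variable R : realType.

Definition mxle m n (A B : 'M[R]_(m, n)) : Prop := forall i j, A i j <= B i j.
Definition mxnonneg m n (A : 'M[R]_(m, n)) : Prop := mxle 0 A.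

Definition monotone n (A : 'M[R]_n) : Prop := A \in unitmx /\ mxnonneg (invmx A).

Definition double_regular_splitting n (A P Rm S : 'M[R]_n) : Prop :=
  [/\ A = P - Rm + S, P \in unitmx, mxnonneg (invmx P), mxnonneg Rm & mxle S 0].
Definition double_weak_regular_splitting n (A P Rm S : 'M[R]_n) : Prop :=
  [/\ A = P - Rm + S, P \in unitmx, mxnonneg (invmx P),
      mxnonneg (invmx P *m Rm) & mxle (invmx P *m S) 0].

Definition cmx m n (A : 'M[R]_(m, n)) : 'M[R[i]]_(m, n) :=
  map_mx (fun x => x%:C%C) A.

Definition in_spectrum n (A : 'M[R]_n) (z : R[i]) : Prop := eigenvalue (cmx A) z.

Lemma char_poly_splits n (A : 'M[R]_n) :
  exists s : seq R[i], char_poly (cmx A) == \prod_(z <- s) ('X - z%:P).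
Proof.
have [s Hs] := closed_field_poly_normal (char_poly (cmx A)).
exists s; rewrite {1}Hs (eqP (char_poly_monic _)) scale1r //.
Qed.

Definition eigenvalues n (A : 'M[R]_n) : seq R[i] := xchoose (char_poly_splits A).

(* spectral radius: max modulus of the (complex) eigenvalues; the modulus `|z| of z : R[i] is a nonnegative real element of R[i], we take its real part to land in R *)
Definition spectral_radius n (A : 'M[R]_n) : R :=
  \big[Num.max/0]_(z <- eigenvalues A) complex.Re `|z|.

End Defs.

(* Spectral radii are certified by positive sub-eigenvectors (Collatz-Wielandt):
   for B >= 0 and v > 0, B v <= mu v gives rho(B) <= mu, and conversely every
   mu > rho(B) admits v > 0 with B v < mu v, namely v = (mu I - B)^-1 1, whose
   nonnegativity is carried down from large mu by a continuity argument.  For a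
   companion matrix [K L; I 0] with K, L >= 0 such a certificate at mu amounts to
   y > 0 with (mu K + L) y <= mu^2 y.

   With Ki = Pi^-1 Ri and Li = - Pi^-1 Si we have Ti = [Ki Li; I 0] and
   W12 = [K2 K1 + L2, K2 L1; I 0].  The vector A^-1 1 certifies rho(T2) < 1, and
   rho(T2) <= rho(T1) by monotonicity of rho, as K2 <= K1 and L2 <= L1.  For
   rho(W12) <= rho(T2) take mu in (rho(T2), 1) and a > 0 with
   (mu K2 + L2) a < mu^2 a.  The regular splitting gives A v >= 0 for
   v = (mu K2 + L2) a, and since P1^-1 A = I - K1 - L1 and K2 <= L2, every y >= 0
   with A y >= 0 satisfies (mu (K2 K1 + L2) + K2 L1) y <= (mu K2 + L2) y.  Hence
   v + eta a certifies rho(W12) <= mu for small eta > 0. *)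

From HB Require Import structures.
From mathcomp Require Import all_boot all_order all_algebra.
From mathcomp Require Import complex reals classical_sets boolp lra.
Import Order.TTheory GRing.Theory Num.Theory.
Local Open Scope ring_scope.
Set Implicit Arguments. Unset Strict Implicit. Unset Printing Implicit Defensive.

Section NonnegativeMatrices.
Variable R : realType.

Definition mxlt m n (A B : 'M[R]_(m, n)) : Prop := forall i j, A i j < B i j.
Definition mxpos m n (A : 'M[R]_(m, n)) : Prop := mxlt 0 A.

Lemma addmxE m n (A B : 'M[R]_(m, n)) i j : (A + B) i j = A i j + B i j.
Proof. by rewrite mxE. Qed.

Lemma oppmxE m n (A : 'M[R]_(m, n)) i j : (- A) i j = - A i j.
Proof. by rewrite mxE. Qed.

Lemma scalemxE m n c (A : 'M[R]_(m, n)) i j : (c *: A) i j = c * A i j.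
Proof. by rewrite mxE. Qed.

Definition mxlinE := (addmxE, oppmxE, scalemxE).

Lemma mxnonnegP m n (A : 'M[R]_(m, n)) : mxnonneg A <-> forall i j, 0 <= A i j.
Proof. by split=> A0 i j; move: (A0 i j); rewrite mxE. Qed.

Lemma mxposP m n (A : 'M[R]_(m, n)) : mxpos A <-> forall i j, 0 < A i j.
Proof. by split=> A0 i j; move: (A0 i j); rewrite mxE. Qed.

Lemma mxnonneg_ge0 m n (A : 'M[R]_(m, n)) i j : mxnonneg A -> 0 <= A i j.
Proof. by move/mxnonnegP; apply. Qed.

Lemma mxpos_gt0 m n (A : 'M[R]_(m, n)) i j : mxpos A -> 0 < A i j.
Proof. by move/mxposP; apply. Qed.

Lemma mxltW m n (A B : 'M[R]_(m, n)) : mxlt A B -> mxle A B.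
Proof. by move=> AB i j; apply: ltW. Qed.

Lemma mxnonnegN m n (A : 'M[R]_(m, n)) : mxnonneg (- A) <-> mxle A 0.
Proof. by split=> A0 i j; move: (A0 i j); rewrite !mxE oppr_ge0. Qed.

Lemma mxnonnegD m n (A B : 'M[R]_(m, n)) :
  mxnonneg A -> mxnonneg B -> mxnonneg (A + B).
Proof.
by move=> /mxnonnegP A0 /mxnonnegP B0; apply/mxnonnegP => i j; rewrite mxE addr_ge0.
Qed.

Lemma mxnonnegZ m n c (A : 'M[R]_(m, n)) : 0 <= c -> mxnonneg A -> mxnonneg (c *: A).
Proof. by move=> c0 /mxnonnegP A0; apply/mxnonnegP => i j; rewrite mxE mulr_ge0. Qed.

Lemma mxnonneg1 m : mxnonneg (1%:M : 'M[R]_m).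
Proof. by apply/mxnonnegP => i j; rewrite mxE ler0n. Qed.

Lemma mxle_wpMl m n p (M : 'M[R]_(m, n)) (X Y : 'M[R]_(n, p)) :
  mxnonneg M -> mxle X Y -> mxle (M *m X) (M *m Y).
Proof.
move=> /mxnonnegP M0 XY i j; rewrite !mxE; apply: ler_sum => k _.
exact: ler_wpM2l.
Qed.

Lemma mxle_wpMr m n p (M N : 'M[R]_(m, n)) (X : 'M[R]_(n, p)) :
  mxnonneg X -> mxle M N -> mxle (M *m X) (N *m X).
Proof.
move=> /mxnonnegP X0 MN i j; rewrite !mxE; apply: ler_sum => k _.
exact: ler_wpM2r.
Qed.

Lemma mxnonneg_mul m n p (M : 'M[R]_(m, n)) (X : 'M[R]_(n, p)) :
  mxnonneg M -> mxnonneg X -> mxnonneg (M *m X).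
Proof. by move=> M0 X0; rewrite /mxnonneg -(mulmx0 _ M); apply: mxle_wpMl. Qed.

Section BlockRelations.
Variable r : R -> R -> Prop.

Lemma col_mx_relP m1 m2 n (A1 B1 : 'M[R]_(m1, n)) (A2 B2 : 'M[R]_(m2, n)) :
  (forall i j, r (col_mx A1 A2 i j) (col_mx B1 B2 i j)) <->
  (forall i j, r (A1 i j) (B1 i j)) /\ (forall i j, r (A2 i j) (B2 i j)).
Proof.
split=> [AB | [AB1 AB2] i j].
  by split=> i j; [move: (AB (lshift m2 i) j) | move: (AB (rshift m1 i) j)];
    rewrite ?col_mxEu ?col_mxEd.
by rewrite -(splitK i); case: (split i) => k /=; rewrite ?col_mxEu ?col_mxEd.
Qed.

Lemma row_mx_relP m n1 n2 (A1 B1 : 'M[R]_(m, n1)) (A2 B2 : 'M[R]_(m, n2)) :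
  (forall i j, r (row_mx A1 A2 i j) (row_mx B1 B2 i j)) <->
  (forall i j, r (A1 i j) (B1 i j)) /\ (forall i j, r (A2 i j) (B2 i j)).
Proof.
split=> [AB | [AB1 AB2] i j].
  by split=> i j; [move: (AB i (lshift n2 j)) | move: (AB i (rshift n1 j))];
    rewrite ?row_mxEl ?row_mxEr.
by rewrite -(splitK j); case: (split j) => k /=; rewrite ?row_mxEl ?row_mxEr.
Qed.

End BlockRelations.

Lemma mxle_col_mx m1 m2 n (A1 B1 : 'M[R]_(m1, n)) (A2 B2 : 'M[R]_(m2, n)) :
  mxle (col_mx A1 A2) (col_mx B1 B2) <-> mxle A1 B1 /\ mxle A2 B2.
Proof. exact: (col_mx_relP (fun x y : R => x <= y)). Qed.

Lemma mxlt_col_mx m1 m2 n (A1 B1 : 'M[R]_(m1, n)) (A2 B2 : 'M[R]_(m2, n)) :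
  mxlt (col_mx A1 A2) (col_mx B1 B2) <-> mxlt A1 B1 /\ mxlt A2 B2.
Proof. exact: (col_mx_relP (fun x y : R => x < y)). Qed.

Lemma mxle_block_mx m1 m2 n1 n2 (A1 B1 : 'M[R]_(m1, n1)) (A2 B2 : 'M[R]_(m1, n2))
    (A3 B3 : 'M[R]_(m2, n1)) (A4 B4 : 'M[R]_(m2, n2)) :
  mxle A1 B1 -> mxle A2 B2 -> mxle A3 B3 -> mxle A4 B4 ->
  mxle (block_mx A1 A2 A3 A4) (block_mx B1 B2 B3 B4).
Proof.
move=> AB1 AB2 AB3 AB4; apply/mxle_col_mx.
by split; apply/(row_mx_relP (fun x y : R => x <= y)).
Qed.

Lemma mulmx_row_gt0 m n p (M : 'M[R]_(m, n)) (X : 'M[R]_(n, p)) i j :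
  mxnonneg M -> mxpos X -> row i M != 0 -> 0 < (M *m X) i j.
Proof.
move=> /mxnonnegP M0 /mxposP X0 Mi_neq0.
have [k Mik] : exists k, M i k != 0.
  apply/existsP; apply: contraR Mi_neq0 => /existsPn Mi0.
  by apply/eqP/rowP => k; rewrite !mxE; apply/eqP/negbNE/Mi0.
rewrite mxE (bigD1 k) //= ltr_wpDr ?sumr_ge0 // => [l _|].
  exact: mulr_ge0 (M0 _ _) (ltW (X0 _ _)).
by rewrite mulr_gt0 // lt_def Mik M0.
Qed.

Lemma mulmx_row_eq0 m n p (M : 'M[R]_(m, n)) (X : 'M[R]_(n, p)) i j :
  mxnonneg M -> mxpos X -> (M *m X) i j = 0 ->
  forall q (Y : 'M[R]_(n, q)) k, (M *m Y) i k = 0.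
Proof.
move=> /mxnonnegP M0 /mxposP X0; rewrite mxE => /psumr_eq0P Mi0 q Y k.
have {}Mi0 := Mi0 (fun l _ => mulr_ge0 (M0 _ _) (ltW (X0 _ _))).
rewrite mxE big1 // => l _; have /eqP := Mi0 l isT.
by rewrite mulf_eq0 [X _ _ == 0]gt_eqF // orbF => /eqP ->; rewrite mul0r.
Qed.

Lemma exists_small_perturbation (I : finType) (a b : I -> R) :
  (forall i, 0 <= a i) ->
  exists2 eta, 0 < eta & forall i, 0 < a i -> 0 < a i + eta * b i.
Proof.
move=> a0; pose S := \sum_i `|b i| / a i.
have S0 : 0 <= S by apply: sumr_ge0 => i _; rewrite divr_ge0.
have S1 : 0 < 1 + S by lra.
exists (1 + S)^-1 => [|i ai]; first by rewrite invr_gt0.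
have bi_le : `|b i| / a i <= S.
  by rewrite /S (bigD1 i) //= lerDl sumr_ge0 // => j _; rewrite divr_ge0.
have bi_lt : (1 + S)^-1 * `|b i| < a i.
  rewrite mulrC ltr_pdivrMr // -[`|b i|](divfK (lt0r_neq0 ai)) mulrC.
  by rewrite ltr_pM2l //; lra.
have : - ((1 + S)^-1 * `|b i|) <= (1 + S)^-1 * b i.
  by rewrite -mulrN; apply: ler_wpM2l; [rewrite invr_ge0 ltW | exact: lerNnormlW].
lra.
Qed.

End NonnegativeMatrices.

Section SpectralRadius.
Variables (R : realType) (m : nat) (B : 'M[R]_m).

Lemma mem_eigenvalues z : (z \in eigenvalues B) = eigenvalue (cmx B) z.
Proof.
by rewrite eigenvalue_root_char (eqP (xchooseP (char_poly_splits B))) root_prod_XsubC.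
Qed.

Lemma spectral_radius_ge0 : 0 <= spectral_radius B.
Proof. exact: bigmax_ge_id. Qed.

Lemma eigenvalue_le_spectral_radius z :
  eigenvalue (cmx B) z -> complex.Re `|z| <= spectral_radius B.
Proof.
by rewrite -mem_eigenvalues => zB; rewrite /spectral_radius (le_bigmax_seq _ _ xpredT _ zB isT).
Qed.

Lemma spectral_radius_le mu : 0 <= mu ->
  (forall z, eigenvalue (cmx B) z -> complex.Re `|z| <= mu) -> spectral_radius B <= mu.
Proof.
move=> mu0 Bmu; rewrite /spectral_radius big_seq.
by apply: bigmax_le => // z; rewrite mem_eigenvalues; apply: Bmu.
Qed.

Lemma spectral_radius_lt_unitmx t : spectral_radius B < t -> t%:M - B \in unitmx.
Proof.
move=> Bt; rewrite unitmxE unitfE; apply/negP => /det0P[v v_neq0 vB].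
have tB : eigenvalue B t.
  apply/eigenvalueP; exists v => //.
  by apply/eqP; rewrite -subr_eq0 -mul_mx_scalar -mulmxBr -opprB mulmxN vB oppr0.
rewrite -(eigenvalue_map (real_complex R)) in tB.
have := eigenvalue_le_spectral_radius tB.
rewrite normc_def /= expr0n /= addr0 sqrtr_sqr => /(le_trans (ler_norm t)).
by rewrite leNgt Bt.
Qed.

End SpectralRadius.

Section CollatzWielandt.
Variables (R : realType) (m : nat) (B : 'M[R]_m).
Hypothesis B0 : mxnonneg B.

Lemma eigenvalue_left_subeigenvector z : eigenvalue (cmx B) z ->
  exists2 p : 'rV[R]_m, mxnonneg p /\ p != 0 & mxle (complex.Re `|z| *: p) (p *m B).
Proof.
move=> /eigenvalueP[w wB w_neq0].
have normE (x : R[i]) : (complex.Re `|x|)%:C%C = `|x| by [].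
exists (\row_j complex.Re `|w 0 j|); first split.
- by apply/mxnonnegP => i j; rewrite mxE -lecR normE normr_ge0.
- apply: contra_neq w_neq0 => /rowP p0; apply/rowP => j; apply/eqP.
  move: (p0 j); rewrite !mxE => /(congr1 (real_complex R)).
  by rewrite normE rmorph0 => /eqP; rewrite normr_eq0.
move=> i j; rewrite !mxE -lecR rmorph_sum rmorphM /= !normE -normrM.
have -> : z * w 0 j = (w *m cmx B) 0 j by rewrite wB mxE.
rewrite mxE; apply: le_trans (ler_norm_sum _ _ _) _; apply: ler_sum => k _.
have Bkj : 0 <= B k j by move/mxnonnegP: B0; apply.
by rewrite !mxE rmorphM normrM (@ger0_norm _ (B k j)%:C%C) ?ler0c.
Qed.

Lemma spectral_radius_le_subeigenvector (v : 'cV[R]_m) mu :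
  mxpos v -> 0 <= mu -> mxle (B *m v) (mu *: v) -> spectral_radius B <= mu.
Proof.
move=> v_pos mu0 Bv; apply: spectral_radius_le => // z.
move=> /eigenvalue_left_subeigenvector[p [p0 p_neq0] pB].
have pv_pos : 0 < (p *m v) 0 0.
  apply: mulmx_row_gt0 => //.
  by rewrite (_ : row 0 p = p) //; apply/rowP => j; rewrite mxE.
have := mxle_wpMr (mxltW v_pos) pB 0 0.
rewrite -mulmxA => /le_trans/(_ (mxle_wpMl p0 Bv 0 0)).
by rewrite -scalemxAl -scalemxAr !scalemxE ler_pM2r.
Qed.

Lemma spectral_radius_lt_subeigenvector (v : 'cV[R]_m) mu :
  mxpos v -> 0 < mu -> mxlt (B *m v) (mu *: v) -> spectral_radius B < mu.
Proof.
move=> v_pos mu0 Bv; have /mxposP v_gt0 := v_pos.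
pose lambda := \big[Num.max/0]_i ((B *m v) i 0 / v i 0).
apply: (@le_lt_trans _ _ lambda).
  apply: spectral_radius_le_subeigenvector v_pos (bigmax_ge_id _ _ _ _) _ => i j.
  by rewrite (ord1 j) scalemxE -ler_pdivrMr //; apply: (le_bigmax _ (fun i => _)).
apply: bigmax_lt => // i _; rewrite ltr_pdivrMr //.
by move: (Bv i 0); rewrite scalemxE mulrC.
Qed.

End CollatzWielandt.

Section Resolvent.
Variables (R : realType) (m : nat) (B : 'M[R]_m).
Hypothesis B0 : mxnonneg B.

Lemma subeigenvector_nonneg t (v x : 'cV[R]_m) :
  mxnonneg v -> mxlt (B *m v) (t *: v) -> mxle (B *m x) (t *: x) -> mxnonneg x.
Proof.
move=> v0 Bv Bx; have v_gt0 i : 0 < v i 0.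
  rewrite lt_def mxnonneg_ge0 // andbT; apply: contraTneq (Bv i 0) => vi0.
  by rewrite scalemxE vi0 mulr0 -leNgt; apply/mxnonneg_ge0/mxnonneg_mul.
apply/mxnonnegP => k j; rewrite {j}(ord1 j) leNgt; apply/negP => xk_lt0.
(* The largest multiple r v below x has r < 0 and touches x in some row i. *)
pose f i := x i 0 / v i 0.
case: (@arg_minP _ _ _ k xpredT f isT) => i _ i_min; set r := f i.
have r_lt0 : r < 0 by apply: le_lt_trans (i_min k isT) _; rewrite pmulr_llt0 ?invr_gt0.
have xi : x i 0 = r * v i 0 by rewrite divfK ?lt0r_neq0.
have y0 : mxnonneg (x - r *: v).
  apply/mxnonnegP => l j; rewrite {j}(ord1 j) !mxlinE subr_ge0 -ler_pdivlMr //.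
  exact: i_min.
have := mxnonneg_ge0 i 0 (mxnonneg_mul B0 y0).
rewrite mulmxBr -scalemxAr !mxlinE.
have := Bx i 0; have := Bv i 0; rewrite !scalemxE xi => Bvi Bxi.
have : r * (t * v i 0 - (B *m v) i 0) < 0 by rewrite pmulr_llt0 // subr_gt0.
lra.
Qed.

Definition resolvent_ones t : 'cV[R]_m := invmx (t%:M - B) *m const_mx 1.

Lemma resolvent_onesE t : spectral_radius B < t ->
  t *: resolvent_ones t - B *m resolvent_ones t = const_mx 1.
Proof.
by move=> /spectral_radius_lt_unitmx Bt; rewrite -mul_scalar_mx -mulmxBl mulKVmx.
Qed.

Lemma resolvent_ones_entry t i j : spectral_radius B < t ->
  t * resolvent_ones t i j - (B *m resolvent_ones t) i j = 1.
Proof.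
move=> /resolvent_onesE/(congr1 (fun M : 'cV[R]_m => M i j)).
by rewrite !mxlinE => ->; rewrite mxE.
Qed.

Lemma resolvent_ones_subeigenvector t : spectral_radius B < t ->
  mxle (B *m resolvent_ones t) (t *: resolvent_ones t).
Proof. by move=> Bt i j; have := resolvent_ones_entry i j Bt; rewrite scalemxE; lra. Qed.

Lemma resolvent_ones_nonneg_large t : spectral_radius B < t ->
  1 + \sum_i \sum_j B i j <= t -> mxnonneg (resolvent_ones t).
Proof.
move=> Bt t_large; apply: (subeigenvector_nonneg (v := const_mx 1) (t := t)).
- by apply/mxnonnegP => i j; rewrite mxE ler01.
- move=> i j; rewrite scalemxE !mxE mulr1; under eq_bigr do rewrite mxE mulr1.
  apply: le_lt_trans (_ : _ <= \sum_i \sum_j B i j) _; last lra.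
  rewrite [leRHS](bigD1 i) //= lerDl sumr_ge0 // => k _.
  by rewrite sumr_ge0 // => l _; apply: mxnonneg_ge0.
- exact: resolvent_ones_subeigenvector.
Qed.

Lemma resolvent_ones_nonneg_down s t : spectral_radius B < s -> s <= t ->
  (forall i, (t - s) * resolvent_ones t i 0 < 1) ->
  mxnonneg (resolvent_ones t) -> mxnonneg (resolvent_ones s).
Proof.
move=> Bs st small ut0.
apply: subeigenvector_nonneg ut0 _ (resolvent_ones_subeigenvector Bs) => i j.
rewrite {j}(ord1 j) scalemxE.
by have := resolvent_ones_entry i 0 (lt_le_trans Bs st); have := small i; lra.
Qed.

Lemma resolvent_ones_lower_bound t : spectral_radius B < t ->
  exists2 c, 0 <= c & forall h, 0 < h -> h * c <= 1 ->
    mxnonneg (resolvent_ones (t + h)) -> forall i, - resolvent_ones t i 0 <= h * c.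
Proof.
move=> Bt; set F := invmx (t%:M - B); set u := resolvent_ones t.
pose C := \sum_i \sum_j `|F i j|; pose U := \sum_i `|u i 0|.
have C0 : 0 <= C by do 2![apply: sumr_ge0 => ? _].
have U0 : 0 <= U by apply: sumr_ge0.
exists (2 * C * (U + 1)) => [|h h0 hc w0 i]; first by rewrite !mulr_ge0 //; lra.
set w := resolvent_ones (t + h) in w0 *; set W := \sum_i w i 0.
(* The resolvent identity, then an l1 bound on w giving W <= 2 U. *)
have uE : u = w + h *: (F *m w).
  have Bth : spectral_radius B < t + h by rewrite (lt_le_trans Bt) // lerDl ltW.
  have : (t%:M - B + h%:M) *m w = const_mx 1.
    by rewrite addrAC -raddfD mulKVmx ?spectral_radius_lt_unitmx.
  rewrite mulmxDl mul_scalar_mx => /(congr1 (mulmx F)).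
  by rewrite mulmxDr mulKmx ?spectral_radius_lt_unitmx // -scalemxAr.
have Fw_le : \sum_i `|(F *m w) i 0| <= C * W.
  rewrite /C mulr_suml; apply: ler_sum => k _; rewrite mxE mulr_suml.
  apply: le_trans (ler_norm_sum _ _ _) _; apply: ler_sum => l _.
  rewrite normrM (ger0_norm (mxnonneg_ge0 _ _ w0)) ler_wpM2l //.
  by rewrite /W (bigD1 l) //= lerDl sumr_ge0 // => k' _; apply: mxnonneg_ge0.
have W_le : W <= U + h * (C * W).
  rewrite {1}/W (eq_bigr (fun k => u k 0 - h * (F *m w) k 0)); last first.
    by move=> k _; rewrite uE !mxlinE; lra.
  rewrite sumrB -mulr_sumr lerD ?ler_sum // => [k _|]; first exact: ler_norm.
  rewrite -mulrN; apply: ler_wpM2l; first exact: ltW.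
  apply: le_trans _ Fw_le; rewrite -sumrN; apply: ler_sum => k _.
  by rewrite -normrN ler_norm.
have ui_ge : - u i 0 <= h * (C * W).
  have Fwi : - (F *m w) i 0 <= C * W.
    apply: le_trans _ Fw_le; rewrite (bigD1 i) //= -normrN.
    by apply: le_trans (ler_norm _) _; rewrite lerDl; apply: sumr_ge0.
  rewrite uE !mxlinE opprD; have := mxnonneg_ge0 i 0 w0.
  by have := ler_wpM2l (ltW h0) Fwi; lra.
have k0 : 0 <= h * C by rewrite mulr_ge0 // ltW.
have k_half : 2 * (h * C) <= 1 by move: hc; rewrite !mulrA; nra.
have W_le2U : W <= 2 * U by move: W_le; rewrite mulrA; nra.
by move: ui_ge; rewrite !mulrA; nra.
Qed.

Lemma resolvent_ones_nonneg_closed t : spectral_radius B < t ->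
  (forall h, 0 < h -> mxnonneg (resolvent_ones (t + h))) -> mxnonneg (resolvent_ones t).
Proof.
move=> Bt above; have [c c0 bound] := resolvent_ones_lower_bound Bt.
apply/mxnonnegP => i j; rewrite {j}(ord1 j) -oppr_le0; apply/ler_addgt0Pr => e e0.
pose h := Num.min e 1 / (c + 1).
have min_gt0 : 0 < Num.min e 1 by rewrite lt_min e0 ltr01.
have h0 : 0 < h by rewrite divr_gt0 //; lra.
have hc : h * c <= Num.min e 1.
  by rewrite mulrAC ler_pdivrMr ?ler_wpM2l ?ltW //; lra.
apply: le_trans (bound h h0 _ (above h h0) i) _.
  by rewrite (le_trans hc) ?ge_min ?lexx ?orbT.
by rewrite add0r (le_trans hc) ?ge_min ?lexx.
Qed.

Lemma resolvent_ones_nonneg mu : spectral_radius B < mu -> mxnonneg (resolvent_ones mu).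
Proof.
move=> Bmu; apply: contrapT => u_mu.
pose E := [set t | mu <= t /\ ~ mxnonneg (resolvent_ones t)]%classic.
have E_ub : ubound E (1 + \sum_i \sum_j B i j).
  move=> t [mu_t ut]; rewrite leNgt; apply/negP => /ltW t_large; apply: ut.
  exact: resolvent_ones_nonneg_large (lt_le_trans Bmu mu_t) t_large.
have E_sup : has_sup E by split; [exists mu | exists (1 + \sum_i \sum_j B i j)].
(* Nonnegativity holds above ts := sup E, hence at ts by closedness, hence a bit
   below ts by the downward step: this contradicts the choice of ts. *)
set ts := sup E.
have mu_ts : mu <= ts by apply: sup_upper_bound.
have Bts := lt_le_trans Bmu mu_ts.
have u_ts : mxnonneg (resolvent_ones ts).
  apply: resolvent_ones_nonneg_closed Bts _ => h h0; apply: contrapT => uh.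
  have : ts + h <= ts by apply: sup_upper_bound => //; split => //; lra.
  by rewrite gerDl leNgt h0.
pose S := \sum_i resolvent_ones ts i 0.
have S0 : 0 <= S by rewrite sumr_ge0 // => i _; apply: mxnonneg_ge0.
have d0 : 0 < (1 + S)^-1 by rewrite invr_gt0; lra.
have [e [mu_e ue]] := sup_adherent d0 E_sup; rewrite -/ts => ts_e.
have e_ts : e <= ts by apply: sup_upper_bound.
apply: ue; apply: (resolvent_ones_nonneg_down (lt_le_trans Bmu mu_e) e_ts _ u_ts) => i.
have ui0 := mxnonneg_ge0 i 0 u_ts.
have ui_le : resolvent_ones ts i 0 <= S.
  by rewrite /S (bigD1 i) //= lerDl sumr_ge0 // => k _; apply: mxnonneg_ge0.
have dS : (1 + S)^-1 * (1 + S) = 1 by rewrite mulVf // gt_eqF //; lra.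
have ts_e' : ts - e < (1 + S)^-1 by lra.
have := ler_wpM2r ui0 (ltW ts_e').
have := ler_wpM2l (ltW d0) ui_le; nra.
Qed.

Lemma exists_subeigenvector mu : spectral_radius B < mu ->
  exists2 v : 'cV[R]_m, mxpos v & mxlt (B *m v) (mu *: v).
Proof.
move=> Bmu; have u0 := resolvent_ones_nonneg Bmu.
have mu0 : 0 < mu := le_lt_trans (spectral_radius_ge0 B) Bmu.
have Bu : mxlt (B *m resolvent_ones mu) (mu *: resolvent_ones mu).
  by move=> i j; have := resolvent_ones_entry i j Bmu; rewrite scalemxE; lra.
exists (resolvent_ones mu) => //; apply/mxposP => i j.
rewrite -(pmulr_rgt0 _ mu0) -scalemxE; apply: le_lt_trans (Bu i j).
exact/mxnonneg_ge0/mxnonneg_mul.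
Qed.

End Resolvent.

Lemma spectral_radius_le_mono (R : realType) m (B1 B2 : 'M[R]_m) :
  mxnonneg B2 -> mxle B2 B1 -> spectral_radius B2 <= spectral_radius B1.
Proof.
move=> B2_ge0 B21; have B1_ge0 : mxnonneg B1 by move=> i j; apply: le_trans (B21 i j).
rewrite leNgt; apply/negP => /midf_lt[B1_mu mu_B2].
have [v v_pos B1v] := exists_subeigenvector B1_ge0 B1_mu.
have mu0 := le_lt_trans (spectral_radius_ge0 B1) B1_mu.
have B2v : mxlt (B2 *m v) (((spectral_radius B1 + spectral_radius B2) / 2) *: v).
  by move=> i j; exact: le_lt_trans (mxle_wpMr (mxltW v_pos) B21 i j) (B1v i j).
have := spectral_radius_lt_subeigenvector B2_ge0 v_pos mu0 B2v.
by rewrite ltNge ltW.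
Qed.

Section Companion.
Variables (R : realType) (m : nat).

Definition companion (K L : 'M[R]_m) : 'M[R]_(m + m) := block_mx K L 1%:M 0.

Lemma companion_le (K K' L L' : 'M[R]_m) :
  mxle K K' -> mxle L L' -> mxle (companion K L) (companion K' L').
Proof. by move=> KK LL; apply: mxle_block_mx => // i j. Qed.

Lemma companion_nonneg (K L : 'M[R]_m) :
  mxnonneg K -> mxnonneg L -> mxnonneg (companion K L).
Proof.
move=> K0 L0; rewrite /mxnonneg -block_mx0.
by apply: mxle_block_mx => //; apply: mxnonneg1.
Qed.

Lemma companion_mul (K L : 'M[R]_m) (x y : 'cV[R]_m) :
  companion K L *m col_mx x y = col_mx (K *m x + L *m y) x.
Proof. by rewrite mul_block_col mul1mx mul0mx addr0. Qed.

Variables (K L : 'M[R]_m).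
Hypotheses (K0 : mxnonneg K) (L0 : mxnonneg L).

Lemma spectral_radius_companion_le mu (y : 'cV[R]_m) : 0 < mu -> mxpos y ->
  mxle ((mu *: K + L) *m y) (mu ^+ 2 *: y) -> spectral_radius (companion K L) <= mu.
Proof.
move=> mu0 y_pos Fy.
apply: (spectral_radius_le_subeigenvector (companion_nonneg K0 L0)
  (v := col_mx (mu *: y) y)).
- rewrite /mxpos -col_mx0; apply/mxlt_col_mx; split => // i j.
  by rewrite !mxE mulr_gt0 // mxpos_gt0.
- exact: ltW.
rewrite companion_mul scale_col_mx; apply/mxle_col_mx; split => [|i j] //.
by rewrite -scalemxAr scalemxAl -mulmxDl scalerA -expr2.
Qed.

Lemma spectral_radius_companion_lt mu (y : 'cV[R]_m) : 0 < mu -> mxpos y ->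
  mxlt ((mu *: K + L) *m y) (mu ^+ 2 *: y) -> spectral_radius (companion K L) < mu.
Proof.
move=> mu0 y_pos Fy.
pose gap i := mu ^+ 2 * y i 0 - mu * (K *m y) i 0 - (L *m y) i 0.
have gap_gt0 i : 0 < gap i.
  by have := Fy i 0; rewrite mulmxDl -scalemxAl !mxlinE /gap; lra.
(* Scaling the lower block by 1 + eta makes the bottom rows strict too. *)
have [eta eta0 perturb] := exists_small_perturbation (fun i => - (L *m y) i 0)
  (fun i => ltW (gap_gt0 i)).
apply: (spectral_radius_lt_subeigenvector (companion_nonneg K0 L0)
  (v := col_mx (mu *: y) ((1 + eta) *: y)) _ mu0).
- rewrite /mxpos -col_mx0; apply/mxlt_col_mx.
  by split => i j; rewrite !mxE mulr_gt0 ?mxpos_gt0 //; lra.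
rewrite companion_mul scale_col_mx; apply/mxlt_col_mx; split => i j; rewrite {j}(ord1 j).
  have := perturb i (gap_gt0 i); rewrite /gap -!scalemxAr !mxlinE expr2; nra.
by rewrite !mxlinE ltr_pM2l // mulrDl mul1r ltrDl mulr_gt0 ?mxpos_gt0.
Qed.

Lemma exists_companion_subeigenvector mu : spectral_radius (companion K L) < mu ->
  exists2 y : 'cV[R]_m, mxpos y & mxlt ((mu *: K + L) *m y) (mu ^+ 2 *: y).
Proof.
move=> T_mu; have mu0 := le_lt_trans (spectral_radius_ge0 _) T_mu.
have [x] := exists_subeigenvector (companion_nonneg K0 L0) T_mu.
rewrite -(vsubmxK x) companion_mul scale_col_mx /mxpos -col_mx0.
move=> /mxlt_col_mx[a_pos _] /mxlt_col_mx[top bot]; exists (usubmx x) => // i j.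
have := mxle_wpMl L0 (mxltW bot) i j; have := top i j.
rewrite -(ltr_pM2l mu0) mulmxDl -!scalemxAl -scalemxAr !mxlinE expr2; lra.
Qed.

End Companion.

Section DoubleSplittings.
Variables (R : realType) (n : nat).
Local Notation ones := (const_mx 1 : 'cV[R]_n).

Lemma unitmx_row_neq0 (M : 'M[R]_n) i : M \in unitmx -> row i M != 0.
Proof.
move=> MU; apply/eqP => Mi0; have := congr1 (row i) (mulmxV MU).
rewrite row_mul Mi0 mul0mx => /rowP/(_ i)/eqP; rewrite !mxE eqxx.
by rewrite eq_sym oner_eq0.
Qed.

Lemma double_regular_splitting_weak (A P Rm S : 'M[R]_n) :
  double_regular_splitting A P Rm S -> double_weak_regular_splitting A P Rm S.
Proof.
case=> eA PU P0 Rm0 /mxnonnegN S0; split => //; first exact: mxnonneg_mul.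
by apply/mxnonnegN; rewrite -mulmxN; apply: mxnonneg_mul.
Qed.

Lemma mulmx_invmx_splitting (A P Rm S : 'M[R]_n) : A = P - Rm + S -> P \in unitmx ->
  invmx P *m A = 1%:M - invmx P *m Rm + invmx P *m S.
Proof. by move=> -> PU; rewrite mulmxDr mulmxBr mulVmx. Qed.

Lemma spectral_radius_double_weak_regular_lt1 (A P Rm S : 'M[R]_n) :
  monotone A -> double_weak_regular_splitting A P Rm S ->
  spectral_radius (companion (invmx P *m Rm) (- (invmx P *m S))) < 1.
Proof.
move=> [AU A0] [eA PU P0 K0 /mxnonnegN L0].
set K := invmx P *m Rm; set L := - (invmx P *m S).
pose u := invmx A *m ones.
have ones_pos : mxpos ones by apply/mxposP => i j; rewrite mxE ltr01.
have u0 : mxnonneg u := mxnonneg_mul A0 (mxltW ones_pos).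
have Q_pos : mxpos (invmx P *m ones).
  apply/mxposP => i j; apply: mulmx_row_gt0 => //.
  by rewrite unitmx_row_neq0 ?unitmx_inv.
have uE : u - (K + L) *m u = invmx P *m ones.
  have <- : invmx P *m A *m u = invmx P *m ones by rewrite -mulmxA mulKVmx.
  rewrite (mulmx_invmx_splitting eA PU).
  apply/matrixP => i j; rewrite -/K !mulmxDl !mulNmx mul1mx !mxlinE; lra.
have Ku_lt : mxlt ((K + L) *m u) u.
  by move=> i j; have := mxpos_gt0 i j Q_pos; rewrite -uE !mxlinE; lra.
have u_pos : mxpos u.
  apply/mxposP => i j; apply: le_lt_trans (Ku_lt i j).
  by apply/mxnonneg_ge0/mxnonneg_mul => //; apply: mxnonnegD.
have := spectral_radius_companion_lt K0 L0 ltr01 u_pos.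
by rewrite expr1n !scale1r; apply.
Qed.

End DoubleSplittings.

Section Comparison.
Variables (R : realType) (n : nat) (A P1 R1 S1 P2 R2 S2 : 'M[R]_n).
Hypotheses (split1 : double_weak_regular_splitting A P1 R1 S1)
  (split2 : double_regular_splitting A P2 R2 S2)
  (K2_le_L2 : mxle (invmx P2 *m R2) (- (invmx P2 *m S2))).

Local Notation K1 := (invmx P1 *m R1).
Local Notation L1 := (- (invmx P1 *m S1)).
Local Notation K2 := (invmx P2 *m R2).
Local Notation L2 := (- (invmx P2 *m S2)).
Local Notation T2_pencil mu := (mu *: K2 + L2).
Local Notation W12_pencil mu := (mu *: (K2 *m K1 + L2) + K2 *m L1).

Let K1_ge0 : mxnonneg K1. Proof. by case: split1. Qed.
Let L1_ge0 : mxnonneg L1. Proof. by case: split1 => _ _ _ _ /mxnonnegN. Qed.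
Let K2_ge0 : mxnonneg K2.
Proof. by case: (double_regular_splitting_weak split2). Qed.
Let L2_ge0 : mxnonneg L2.
Proof. by case: (double_regular_splitting_weak split2) => _ _ _ _ /mxnonnegN. Qed.

Lemma W12_pencil_le mu (y : 'cV[R]_n) :
  0 <= mu <= 1 -> mxnonneg y -> mxnonneg (A *m y) -> mxle (W12_pencil mu *m y) (T2_pencil mu *m y).
Proof.
move=> /andP[mu0 mu1] y0 Ay0 i j; case: split1 => eA1 P1U P10 _ _.
have Q1Ay : invmx P1 *m A *m y = y - K1 *m y - L1 *m y.
  by rewrite (mulmx_invmx_splitting eA1 P1U) !mulmxDl !mulNmx mul1mx opprK.
have := mxnonneg_ge0 i j (mxnonneg_mul K2_ge0 (mxnonneg_mul P10 Ay0)).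
rewrite [invmx P1 *m (A *m y)]mulmxA Q1Ay !mulmxBr !mxlinE.
have := mxle_wpMr y0 K2_le_L2 i j.
have := mxnonneg_ge0 i j (mxnonneg_mul K2_ge0 (mxnonneg_mul K1_ge0 y0)).
rewrite !mulmxDl -!scalemxAl mulmxDl -!mulmxA !mxlinE; nra.
Qed.

Lemma mulmx_T2_pencil_nonneg mu (a : 'cV[R]_n) : 0 <= mu <= 1 -> mxnonneg a ->
  mxle (T2_pencil mu *m a) (mu ^+ 2 *: a) -> mxnonneg (A *m (T2_pencil mu *m a)).
Proof.
move=> /andP[mu0 mu1] a0 Fa; case: split2 => eA2 P2U _ R20 /mxnonnegN S20.
set v := T2_pencil mu *m a.
have P2v : P2 *m v = mu *: (R2 *m a) - S2 *m a.
  have -> : v = invmx P2 *m (mu *: (R2 *m a) - S2 *m a).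
    by rewrite /v mulmxBr -scalemxAr !mulmxA mulmxDl -scalemxAl mulNmx.
  by rewrite mulKVmx.
apply/mxnonnegP => i j; rewrite eA2 !mulmxDl mulNmx P2v !mxlinE.
have R2v := mxle_wpMl R20 Fa i j; have S2v := mxle_wpMl S20 Fa i j.
have R2a := mxnonneg_ge0 i j (mxnonneg_mul R20 a0).
have S2a := mxnonneg_ge0 i j (mxnonneg_mul S20 a0).
rewrite -!scalemxAr !mulNmx !mxlinE in R2v S2v S2a.
have : 0 <= (mu - mu ^+ 2) * (R2 *m a) i j by rewrite mulr_ge0 // subr_ge0 expr2 ler_piMr.
have : 0 <= (1 - mu ^+ 2) * - (S2 *m a) i j.
  by rewrite mulr_ge0 // subr_ge0 expr_le1.
lra.
Qed.

Lemma W12_pencil_row_eq0 mu (d x : 'cV[R]_n) i : 0 < mu -> mxpos d ->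
  (T2_pencil mu *m d) i 0 = 0 -> (W12_pencil mu *m x) i 0 = 0.
Proof.
move=> mu0 d_pos; rewrite mulmxDl -scalemxAl !mxlinE => Fd0.
have K2d := mxnonneg_ge0 i 0 (mxnonneg_mul K2_ge0 (mxltW d_pos)).
have L2d := mxnonneg_ge0 i 0 (mxnonneg_mul L2_ge0 (mxltW d_pos)).
have muK2d := mulr_ge0 (ltW mu0) K2d.
have K2d0 : (K2 *m d) i 0 = 0.
  have /eqP : mu * (K2 *m d) i 0 = 0 by lra.
  by rewrite mulf_eq0 gt_eqF //= => /eqP.
have L2d0 : (L2 *m d) i 0 = 0 by lra.
rewrite mulmxDl -scalemxAl mulmxDl -[K2 *m K1 *m x]mulmxA -[K2 *m L1 *m x]mulmxA !mxlinE.
by rewrite !(mulmx_row_eq0 K2_ge0 d_pos K2d0) (mulmx_row_eq0 L2_ge0 d_pos L2d0) !addr0 mulr0.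
Qed.

Lemma exists_W12_subeigenvector mu (a : 'cV[R]_n) : 0 < mu <= 1 -> mxpos a ->
  mxlt (T2_pencil mu *m a) (mu ^+ 2 *: a) ->
  exists2 y : 'cV[R]_n, mxpos y &
    mxle (W12_pencil mu *m y) (mu ^+ 2 *: y).
Proof.
move=> /andP[mu0 mu1] a_pos Fa; have mu01 : 0 <= mu <= 1 by rewrite ltW.
set F := T2_pencil mu; set G := W12_pencil mu.
have F0 : mxnonneg F by apply: mxnonnegD => //; apply: mxnonnegZ; rewrite ?ltW.
have a0 := mxltW a_pos; set v := F *m a.
have v0 : mxnonneg v := mxnonneg_mul F0 a0.
have Gv := W12_pencil_le mu01 v0 (mulmx_T2_pencil_nonneg mu01 a0 (mxltW Fa)).
set d := mu ^+ 2 *: a - v.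
have d_pos : mxpos d by apply/mxposP => i j; have := Fa i j; rewrite !mxlinE; lra.
have Fd0 := mxnonneg_mul F0 (mxltW d_pos).
have [eta eta0 perturb] := exists_small_perturbation
  (fun i => (mu ^+ 2 *: a - G *m a) i 0) (fun i => mxnonneg_ge0 i 0 Fd0).
exists (v + eta *: a).
  apply/mxposP => i j; rewrite !mxlinE.
  by apply: ltr_wpDl; rewrite ?mxnonneg_ge0 ?mulr_gt0 ?mxpos_gt0.
move=> i j; rewrite {j}(ord1 j) mulmxDr -scalemxAr !mxlinE.
have Fd : (F *m d) i 0 = mu ^+ 2 * v i 0 - (F *m v) i 0.
  by rewrite mulmxBr -scalemxAr !mxlinE.
have := Gv i 0; have := mxnonneg_ge0 i 0 Fd0; rewrite Fd.
have [Fd_gt0|] := ltP 0 ((F *m d) i 0).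
  by have := perturb i Fd_gt0; rewrite Fd !mxlinE; lra.
(* Where (F d)_i = 0 the i-th rows of K2 and L2 vanish, and so does (G a)_i. *)
move=> Fd_le0 Fd_ge0; have Ga0 : (G *m a) i 0 = 0.
  by apply: W12_pencil_row_eq0 mu0 d_pos _; apply/le_anti; rewrite Fd_le0 mxnonneg_ge0.
have : 0 <= mu ^+ 2 * (eta * a i 0) by rewrite !mulr_ge0 ?ltW ?mxpos_gt0.
rewrite Ga0; lra.
Qed.

Lemma spectral_radius_W12_le_T2 : monotone A ->
  spectral_radius (companion (K2 *m K1 + L2) (K2 *m L1)) <= spectral_radius (companion K2 L2).
Proof.
move=> A_monotone; rewrite leNgt; apply/negP => T2_W.
have T2_lt1 := spectral_radius_double_weak_regular_lt1 A_monotone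
  (double_regular_splitting_weak split2).
have /midf_lt[T2_mu] : spectral_radius (companion K2 L2) <
    Num.min (spectral_radius (companion (K2 *m K1 + L2) (K2 *m L1))) 1.
  by rewrite lt_min T2_W.
set mu := (_ + _) / 2; rewrite lt_min => /andP[mu_W mu1].
have mu0 : 0 < mu := le_lt_trans (spectral_radius_ge0 _) T2_mu.
have [a a_pos Fa] := exists_companion_subeigenvector K2_ge0 L2_ge0 T2_mu.
have mu_ok : 0 < mu <= 1 by rewrite mu0 ltW.
have [y y_pos Gy] := exists_W12_subeigenvector mu_ok a_pos Fa.
have W_ge0 := mxnonnegD (mxnonneg_mul K2_ge0 K1_ge0) L2_ge0.
have := spectral_radius_companion_le W_ge0 (mxnonneg_mul K2_ge0 L1_ge0) mu0 y_pos Gy.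
by rewrite leNgt mu_W.
Qed.

End Comparison.

Unset Implicit Arguments.

Theorem corollary3p18 (R : realType) (n : nat) (A P1 R1 S1 P2 R2 S2 : 'M[R]_n) :
  monotone A ->
  double_weak_regular_splitting A P1 R1 S1 ->
  double_regular_splitting A P2 R2 S2 ->
  ~ in_spectrum (R2 *m invmx P1) (-1) ->
  monotone ((1%:M + R2 *m invmx P1) *m A) ->
  mxle (invmx P2 *m R2) (invmx P1 *m R1) ->
  mxle (invmx P1 *m S1) (invmx P2 *m S2) ->
  mxle (invmx P2 *m R2 + invmx P2 *m S2) 0 ->
  let W12 := block_mx (invmx P2 *m R2 *m invmx P1 *m R1 - invmx P2 *m S2)
                      (- (invmx P2 *m R2 *m invmx P1 *m S1))
                      1%:M 0 in
  let T1 := block_mx (invmx P1 *m R1) (- (invmx P1 *m S1)) 1%:M 0 in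
  let T2 := block_mx (invmx P2 *m R2) (- (invmx P2 *m S2)) 1%:M 0 in
  spectral_radius W12 <= Num.min (spectral_radius T1) (spectral_radius T2) /\
  Num.min (spectral_radius T1) (spectral_radius T2) < 1.
Proof.
move=> A_monotone split1 split2 _ _ K21 S12 KL2 W12 T1 T2.
have K2_le_L2 : mxle (invmx P2 *m R2) (- (invmx P2 *m S2)).
  by move=> i j; have := KL2 i j; rewrite addmxE oppmxE [X in _ <= X]mxE; lra.
have weak2 := double_regular_splitting_weak split2.
have [_ _ _ K2_ge0 /mxnonnegN L2_ge0] := weak2.
have T21 : spectral_radius T2 <= spectral_radius T1.
  apply: spectral_radius_le_mono; first exact: companion_nonneg.
  by apply: companion_le => // i j; rewrite !oppmxE lerN2; apply: S12.
rewrite (min_r T21); split.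
  have -> : W12 = companion (invmx P2 *m R2 *m (invmx P1 *m R1) + - (invmx P2 *m S2))
      (invmx P2 *m R2 *m - (invmx P1 *m S1)) by rewrite /W12 /companion mulmxN !mulmxA.
  exact: spectral_radius_W12_le_T2 split1 split2 K2_le_L2 A_monotone.
exact: spectral_radius_double_weak_regular_lt1 A_monotone weak2.
Qed.
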